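(* For all loop-free hybrid programs $A,B,C,D$ and every set of variables $H$: if $FV(C)\cup FV(D)\subseteq H$, $A\equiv_H B$, and $C\equiv_H D$, then $(A;C)\equiv_H(B;D)$.
   Context: Hybrid programs and their transition semantics $[\![\cdot]\!]$ are as in differential dynamic logic ($x:=\theta$, $x:=*$, $?\phi$, $x'=\theta\,\&\,Q$, $;$, $\cup$, $^*$); a program is loop-free if it contains no $^*$. $FV(\alpha)$ is the standard $d\mathcal{L}$ set of free variables of $\alpha$: $FV(x:=\theta)=FV(\theta)$, $FV(x:=* )=\emptyset$, $FV(?\phi)=FV(\phi)$, $FV(x'=\theta\,\&\,Q)=\{x\}\cup FV(\theta)\cup FV(Q)$, $FV(\alpha\cup\beta)=FV(\alpha)\cup FV(\beta)$, $FV(\alpha;\beta)=FV(\alpha)\cup(FV(\beta)\setminus MBV(\alpha))$, $FV(\alpha^* )=FV(\alpha)$, where $MBV$ (must-bound variables) is: $\{x\}$ for $x:=\theta$ and $x:=*$, $\emptyset$ for tests and loops, $\{x,x'\}$ for ODEs, $MBV(\alpha\cup\beta)=MBV(\alpha)\cap MBV(\beta)$, $MBV(\alpha;\beta)=MBV(\alpha)\cup MBV(\beta)$. States $\sigma,\sigma'$ satisfy $\sigma\approx_H\sigma'$ iff they agree on every variable in $H$. For loop-free programs, $\alpha\equiv_H\beta$ iff for all states $\sigma_0,\sigma_1$ with $(\sigma_0,\sigma_1)\in[\![\alpha]\!]$ there exist $\sigma'_0,\sigma'_1$ with $(\sigma'_0,\sigma'_1)\in[\![\beta]\!]$, $\sigma_0\approx_H\sigma'_0$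 and $\sigma_1\approx_H\sigma'_1$, and symmetrically with $\alpha,\beta$ exchanged. *)

From Stdlib Require Import Reals.
Open Scope R_scope.

(* Variables: ordinary variables x_n and differential symbols x_n'. *)
Inductive var : Type := Var (n : nat) | DVar (n : nat).

Definition var_eq_dec (x y : var) : {x = y} + {x <> y}.
Proof. decide equality; apply PeanoNat.Nat.eq_dec. Defined.

Definition state := var -> R.

Definition upd (s : state) (x : var) (v : R) : state :=
  fun y => if var_eq_dec y x then v else s y.

Definition vset := var -> Prop.

Inductive term : Type :=
  | TVar (x : var)
  | TConst (c : R)
  | TNeg (a : term)
  | TPlus (a b : term)
  | TMinus (a b : term)
  | TMult (a b : term).

Fixpoint teval (s : state) (t : term) : R :=
  match t with
  | TVar x => s x
  | TConst c => c
  | TNeg a => - teval s a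
  | TPlus a b => teval s a + teval s b
  | TMinus a b => teval s a - teval s b
  | TMult a b => teval s a * teval s b
  end.

Inductive fml : Type :=
  | FTrue | FFalse
  | FEq (a b : term) | FGe (a b : term) | FGt (a b : term)
  | FNot (p : fml) | FAnd (p q : fml) | FOr (p q : fml) | FImp (p q : fml)
  | FForall (x : var) (p : fml) | FExists (x : var) (p : fml)
  | FBox (a : prog) (p : fml) | FDia (a : prog) (p : fml)
with prog : Type :=
  | PAssign (x : var) (t : term)
  | PRand (x : var)
  | PTest (p : fml)
  | PODE (n : nat) (t : term) (q : fml)   (* x_n' = t & q *)
  | PSeq (a b : prog)
  | PChoice (a b : prog)
  | PLoop (a : prog).

(* Derivative of f at t within the domain D (one-sided at boundary points). *)
Definition deriv_within (f : R -> R) (D : R -> Prop) (t l : R) : Prop :=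
  forall eps, 0 < eps -> exists delta, 0 < delta /\
    forall h, h <> 0 -> Rabs h < delta -> D (t + h) ->
      Rabs ((f (t + h) - f t) / h - l) < eps.

Fixpoint fsem (p : fml) (s : state) {struct p} : Prop :=
  match p with
  | FTrue => True
  | FFalse => False
  | FEq a b => teval s a = teval s b
  | FGe a b => teval s a >= teval s b
  | FGt a b => teval s a > teval s b
  | FNot q => ~ fsem q s
  | FAnd q r => fsem q s /\ fsem r s
  | FOr q r => fsem q s \/ fsem r s
  | FImp q r => fsem q s -> fsem r s
  | FForall x q => forall v, fsem q (upd s x v)
  | FExists x q => exists v, fsem q (upd s x v)
  | FBox a q => forall s', psem a s s' -> fsem q s'
  | FDia a q => exists s', psem a s s' /\ fsem q s'
  end
with psem (a : prog) (s s' : state) {struct a} : Prop :=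
  match a with
  | PAssign x t => s' = upd s x (teval s t)
  | PRand x => exists v, s' = upd s x v
  | PTest q => s' = s /\ fsem q s
  | PODE n t q =>
      exists (r : R) (phi : R -> state),
        0 <= r /\
        (forall y, y <> DVar n -> phi 0 y = s y) /\
        s' = phi r /\
        (forall z, 0 <= z <= r ->
           phi z (DVar n) = teval (phi z) t /\ fsem q (phi z) /\
           (forall y, y <> Var n -> y <> DVar n -> phi z y = phi 0 y)) /\
        (0 < r -> forall z, 0 <= z <= r ->
           deriv_within (fun u => phi u (Var n)) (fun u => 0 <= u <= r) z
                        (phi z (DVar n)))
  | PSeq a1 a2 => exists m, psem a1 s m /\ psem a2 m s'
  | PChoice a1 a2 => psem a1 s s' \/ psem a2 s s'
  | PLoop a1 => exists (k : nat) (f : nat -> state),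
      f O = s /\ f k = s' /\ forall i, (i < k)%nat -> psem a1 (f i) (f (S i))
  end.

Fixpoint FVt (t : term) : vset :=
  match t with
  | TVar x => fun v => v = x
  | TConst _ => fun _ => False
  | TNeg a => FVt a
  | TPlus a b | TMinus a b | TMult a b => fun v => FVt a v \/ FVt b v
  end.

Fixpoint MBV (a : prog) : vset :=
  match a with
  | PAssign x _ | PRand x => fun v => v = x
  | PTest _ => fun _ => False
  | PODE n _ _ => fun v => v = Var n \/ v = DVar n
  | PSeq a1 a2 => fun v => MBV a1 v \/ MBV a2 v
  | PChoice a1 a2 => fun v => MBV a1 v /\ MBV a2 v
  | PLoop _ => fun _ => False
  end.

Fixpoint FVf (p : fml) : vset :=
  match p with
  | FTrue | FFalse => fun _ => False
  | FEq a b | FGe a b | FGt a b => fun v => FVt a v \/ FVt b v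
  | FNot q => FVf q
  | FAnd q r | FOr q r | FImp q r => fun v => FVf q v \/ FVf r v
  | FForall x q | FExists x q => fun v => FVf q v /\ v <> x
  | FBox a q | FDia a q => fun v => FVp a v \/ (FVf q v /\ ~ MBV a v)
  end
with FVp (a : prog) : vset :=
  match a with
  | PAssign _ t => FVt t
  | PRand _ => fun _ => False
  | PTest q => FVf q
  | PODE n t q => fun v => v = Var n \/ FVt t v \/ FVf q v
  | PSeq a1 a2 => fun v => FVp a1 v \/ (FVp a2 v /\ ~ MBV a1 v)
  | PChoice a1 a2 => fun v => FVp a1 v \/ FVp a2 v
  | PLoop a1 => FVp a1
  end.

Fixpoint loop_free (a : prog) : Prop :=
  match a with
  | PAssign _ _ | PRand _ | PTest _ | PODE _ _ _ => True
  | PSeq a1 a2 | PChoice a1 a2 => loop_free a1 /\ loop_free a2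
  | PLoop _ => False
  end.

Definition agree (H : vset) (s s' : state) : Prop :=
  forall v, H v -> s v = s' v.

Definition equivH (H : vset) (a b : prog) : Prop :=
  (forall s0 s1, psem a s0 s1 ->
     exists s0' s1', psem b s0' s1' /\ agree H s0 s0' /\ agree H s1 s1') /\
  (forall s0 s1, psem b s0 s1 ->
     exists s0' s1', psem a s0' s1' /\ agree H s0 s0' /\ agree H s1 s1').

(* The heart of the argument is the coincidence lemma for programs: if
   FV(a) ⊆ V and two initial states agree on V, then every run of a from the
   first state is matched by a run from the second whose final states agree
   on V ∪ MBV(a).

   The theorem then follows from one direction, [seq_simulates]: given a run
   A;C through a middle state m, the hypothesis A ≡_H B yields a run of B
   ending in some m' ≈_H m, and C ≡_H D yields a run of D starting in some
   m'' ≈_H m.  Since FV(D) ⊆ H, coincidence moves that run of D to start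
   exactly at m', which glues it to the run of B. *)
From Stdlib Require Import Reals Lia Classical.
Open Scope R_scope.

Scheme fml_mut := Induction for fml Sort Prop
with prog_mut := Induction for prog Sort Prop.
Combined Scheme fml_prog_ind from fml_mut, prog_mut.

Lemma agree_sym V s s' : agree V s s' -> agree V s' s.
Proof. intros Hag v Hv; symmetry; auto. Qed.

Lemma agree_trans V s1 s2 s3 : agree V s1 s2 -> agree V s2 s3 -> agree V s1 s3.
Proof. intros H12 H23 v Hv; rewrite H12, H23; auto. Qed.

Lemma agree_sub (V W : vset) s s' :
  (forall v, W v -> V v) -> agree V s s' -> agree W s s'.
Proof. intros HWV Hag v Hv; auto. Qed.

Lemma agree_union_l V W s s' : agree (fun v => V v \/ W v) s s' -> agree V s s'.
Proof. apply agree_sub; auto. Qed.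

Lemma agree_union_r V W s s' : agree (fun v => V v \/ W v) s s' -> agree W s s'.
Proof. apply agree_sub; auto. Qed.

Lemma agree_upd V s s' x v :
  agree (fun y => V y /\ y <> x) s s' -> agree V (upd s x v) (upd s' x v).
Proof. unfold upd; intros Hag y Hy; destruct (var_eq_dec y x); auto. Qed.

Lemma agree_upd_bound V s s' x v :
  agree V s s' -> agree (fun y => V y \/ y = x) (upd s x v) (upd s' x v).
Proof.
  unfold upd; intros Hag y Hy; destruct (var_eq_dec y x); auto.
  destruct Hy; [auto | contradiction].
Qed.

Lemma teval_coinc (t : term) (s s' : state) :
  agree (FVt t) s s' -> teval s t = teval s' t.
Proof.
  induction t; simpl; intros Hag;
    try (rewrite IHt1, IHt2 by (eapply agree_sub; [|exact Hag]; simpl; auto);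
         reflexivity).
  - apply Hag; reflexivity.
  - reflexivity.
  - rewrite IHt by exact Hag; reflexivity.
Qed.

Lemma cmp_coinc (rel : R -> R -> Prop) a b s s' :
  agree (fun v => FVt a v \/ FVt b v) s s' ->
  (rel (teval s a) (teval s b) <-> rel (teval s' a) (teval s' b)).
Proof.
  intros Hag.
  rewrite (teval_coinc a s s' (agree_union_l _ _ _ _ Hag)),
          (teval_coinc b s s' (agree_union_r _ _ _ _ Hag)).
  reflexivity.
Qed.

Definition fml_coincides (p : fml) : Prop :=
  forall s s', agree (FVf p) s s' -> (fsem p s <-> fsem p s').

Definition prog_coincides (a : prog) : Prop :=
  forall (V : vset) s s' t, (forall v, FVp a v -> V v) ->
  agree V s s' -> psem a s t ->
  exists t', psem a s' t' /\ agree (fun v => V v \/ MBV a v) t t'.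

(* A run from s1 transfers to s2 when they agree on the free variables of a
   modality [a]p; the final states then agree on FV(p), because any variable
   of p that is not must-bound by a is free in [a]p. *)
Lemma run_transfer a p s1 s2 t :
  prog_coincides a ->
  agree (fun v => FVp a v \/ FVf p v /\ ~ MBV a v) s1 s2 -> psem a s1 t ->
  exists t', psem a s2 t' /\ agree (FVf p) t t'.
Proof.
  intros Ha Hag Hrun.
  destruct (Ha _ s1 s2 t (fun v Hv => or_introl Hv) Hag Hrun) as [t' [Hrun' Hag']].
  exists t'; split; [exact Hrun'|].
  intros v Hv; apply Hag'.
  destruct (classic (MBV a v)); [right | left; right]; auto.
Qed.

Lemma box_coincides a p :
  prog_coincides a -> fml_coincides p -> fml_coincides (FBox a p).
Proof.
  intros Ha Hp.
  assert (Hdir : forall s1 s2,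
            agree (fun v => FVp a v \/ FVf p v /\ ~ MBV a v) s1 s2 ->
            fsem (FBox a p) s1 -> fsem (FBox a p) s2).
  { intros s1 s2 Hag Hbox t Hrun.
    destruct (run_transfer a p s2 s1 t Ha (agree_sym _ _ _ Hag) Hrun)
      as [t' [Hrun' Hpost]].
    apply (Hp t t' Hpost), Hbox, Hrun'. }
  intros s s' Hag; split; apply Hdir; auto using agree_sym.
Qed.

Lemma dia_coincides a p :
  prog_coincides a -> fml_coincides p -> fml_coincides (FDia a p).
Proof.
  intros Ha Hp.
  assert (Hdir : forall s1 s2,
            agree (fun v => FVp a v \/ FVf p v /\ ~ MBV a v) s1 s2 ->
            fsem (FDia a p) s1 -> fsem (FDia a p) s2).
  { intros s1 s2 Hag [t [Hrun Hpt]].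
    destruct (run_transfer a p s1 s2 t Ha Hag Hrun) as [t' [Hrun' Hpost]].
    exists t'; split; [exact Hrun' | apply (Hp t t' Hpost), Hpt]. }
  intros s s' Hag; split; apply Hdir; auto using agree_sym.
Qed.

Lemma forall_coincides x p : fml_coincides p -> fml_coincides (FForall x p).
Proof.
  intros Hp s s' Hag; simpl; split; intros Hq v;
    apply (Hp (upd s x v) (upd s' x v) (agree_upd _ _ _ _ _ Hag)), Hq.
Qed.

Lemma exists_coincides x p : fml_coincides p -> fml_coincides (FExists x p).
Proof.
  intros Hp s s' Hag; simpl; split; intros [v Hq]; exists v;
    apply (Hp (upd s x v) (upd s' x v) (agree_upd _ _ _ _ _ Hag)), Hq.
Qed.

Lemma assign_coincides x t : prog_coincides (PAssign x t).
Proof.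
  intros V s s' u HFV Hag ->; simpl in HFV.
  exists (upd s' x (teval s' t)); split; [reflexivity|].
  rewrite (teval_coinc t s s') by (eapply agree_sub; [|exact Hag]; auto).
  apply agree_upd_bound, Hag.
Qed.

Lemma rand_coincides x : prog_coincides (PRand x).
Proof.
  intros V s s' u _ Hag [v ->].
  exists (upd s' x v); split; [exists v; reflexivity | apply agree_upd_bound, Hag].
Qed.

Lemma test_coincides q : fml_coincides q -> prog_coincides (PTest q).
Proof.
  intros Hq V s s' u HFV Hag [-> Hs].
  exists s'; split.
  - split; [reflexivity|]. apply (Hq s s'); [eapply agree_sub; eauto | exact Hs].
  - eapply agree_sub; [|exact Hag]. simpl; intros v [Hv | []]; exact Hv.
Qed.

Lemma seq_coincides a b :
  prog_coincides a -> prog_coincides b -> prog_coincides (PSeq a b).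
Proof.
  intros Ha Hb V s s' u HFV Hag [m [Hm Hu]].
  destruct (Ha V s s' m (fun v Hv => HFV v (or_introl Hv)) Hag Hm) as [m' [Hm' Hagm]].
  assert (HFVb : forall v, FVp b v -> V v \/ MBV a v).
  { intros v Hv; destruct (classic (MBV a v)) as [Hmbv | Hmbv]; [right; exact Hmbv | left; apply HFV; simpl; auto]. }
  destruct (Hb _ m m' u HFVb Hagm Hu) as [u' [Hu' Hagu]].
  exists u'; split; [exists m'; auto|].
  eapply agree_sub; [|exact Hagu]; simpl; tauto.
Qed.

Lemma choice_coincides a b :
  prog_coincides a -> prog_coincides b -> prog_coincides (PChoice a b).
Proof.
  intros Ha Hb V s s' u HFV Hag [Hu | Hu].
  - destruct (Ha V s s' u (fun v Hv => HFV v (or_introl Hv)) Hag Hu) as [u' [Hu' Hagu]].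
    exists u'; split; [left; exact Hu'|]. eapply agree_sub; [|exact Hagu]; simpl; tauto.
  - destruct (Hb V s s' u (fun v Hv => HFV v (or_intror Hv)) Hag Hu) as [u' [Hu' Hagu]].
    exists u'; split; [right; exact Hu'|]. eapply agree_sub; [|exact Hagu]; simpl; tauto.
Qed.

Definition chain (a : prog) (k : nat) (f : nat -> state) : Prop :=
  forall i, (i < k)%nat -> psem a (f i) (f (S i)).

Lemma chain_transfer a V :
  prog_coincides a -> (forall v, FVp a v -> V v) ->
  forall k f s', chain a k f -> agree V (f O) s' ->
  exists g, g O = s' /\ chain a k g /\ agree V (f k) (g k).
Proof.
  intros Ha HFV k; induction k as [|k IH]; intros f s' Hf Hag.
  - exists (fun _ => s'); split; [reflexivity|]; split; [intros i Hi; lia | exact Hag].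
  - destruct (Ha V (f O) s' (f 1%nat) HFV Hag (Hf O ltac:(lia))) as [t' [Ht' Hagt]].
    destruct (IH (fun i => f (S i)) t') as [g [Hg0 [Hg Hagk]]].
    + intros i Hi; apply Hf; lia.
    + eapply agree_union_l, Hagt.
    + exists (fun i => match i with O => s' | S j => g j end).
      split; [reflexivity|]; split; [|exact Hagk].
      intros [|i] Hi; [rewrite Hg0; exact Ht' | apply Hg; lia].
Qed.

Lemma loop_coincides a : prog_coincides a -> prog_coincides (PLoop a).
Proof.
  intros Ha V s s' u HFV Hag [k [f [Hf0 [Hfk Hf]]]]; subst s u.
  destruct (chain_transfer a V Ha HFV k f s' Hf Hag) as [g [Hg0 [Hg Hagk]]].
  exists (g k); split; [exists k, g; auto|].
  eapply agree_sub; [|exact Hagk]; simpl; intros v [Hv | []]; exact Hv.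
Qed.

Definition splice (n : nat) (phi : R -> state) (s' : state) : R -> state :=
  fun z y => if var_eq_dec y (Var n) then phi z y
             else if var_eq_dec y (DVar n) then phi z y else s' y.

Lemma splice_ode_vars n phi s' z :
  splice n phi s' z (Var n) = phi z (Var n) /\
  splice n phi s' z (DVar n) = phi z (DVar n).
Proof.
  unfold splice; split.
  - destruct (var_eq_dec (Var n) (Var n)); congruence.
  - destruct (var_eq_dec (DVar n) (Var n)); [discriminate|].
    destruct (var_eq_dec (DVar n) (DVar n)); congruence.
Qed.

Lemma splice_agree n phi s' (V : vset) z :
  (forall y, y <> Var n -> y <> DVar n -> phi z y = phi 0 y) ->
  (forall y, V y -> y <> DVar n -> phi 0 y = s' y) ->
  agree (fun v => V v \/ v = Var n \/ v = DVar n) (phi z) (splice n phi s' z).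
Proof.
  intros Hconst Hinit y Hy; unfold splice.
  destruct (var_eq_dec y (Var n)); [reflexivity|].
  destruct (var_eq_dec y (DVar n)); [reflexivity|].
  rewrite Hconst, Hinit by (auto || (destruct Hy as [Hy | [Hy | Hy]]; auto; contradiction)).
  reflexivity.
Qed.

Lemma deriv_within_ext f g D t l :
  (forall u, f u = g u) -> deriv_within f D t l -> deriv_within g D t l.
Proof.
  intros Efg Hd eps Heps; destruct (Hd eps Heps) as [d [Hd0 Hd1]].
  exists d; split; [exact Hd0|]. intros h Hh Hhd HD; rewrite <- !Efg; auto.
Qed.

(* An ODE solution from s is replayed from s' by splicing: the evolution of
   x_n, x_n' is unchanged (it only depends on FV of the ODE), and every other
   variable keeps its value from s'. *)
Lemma ode_coincides n t q : fml_coincides q -> prog_coincides (PODE n t q).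
Proof.
  intros Hq V s s' u HFV Hag [r [phi [Hr [Hinit [-> [Hsol Hder]]]]]].
  simpl in HFV.
  assert (Hphi0 : forall y, V y -> y <> DVar n -> phi 0 y = s' y).
  { intros y Hy Hy'; rewrite Hinit by exact Hy'; apply Hag, Hy. }
  assert (Hsplice : forall z, 0 <= z <= r ->
            agree (fun v => V v \/ v = Var n \/ v = DVar n) (phi z) (splice n phi s' z)).
  { intros z Hz; apply splice_agree; [apply Hsol, Hz | exact Hphi0]. }
  assert (Hsplice_FV : forall z, 0 <= z <= r ->
            agree (fun v => FVt t v \/ FVf q v) (phi z) (splice n phi s' z)).
  { intros z Hz; eapply agree_sub; [|apply Hsplice, Hz]; intros v Hv; left; apply HFV; tauto. }
  exists (splice n phi s' r); split.
  - exists r, (splice n phi s'); split; [exact Hr|]; split; [|split; [reflexivity | split]].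
    + intros y Hy; unfold splice.
      destruct (var_eq_dec y (Var n)) as [-> | Hyx].
      * apply Hphi0; [apply HFV; left; reflexivity | discriminate].
      * destruct (var_eq_dec y (DVar n)); [contradiction | reflexivity].
    + intros z Hz; destruct (Hsol z Hz) as [Hode [Hqz _]].
      destruct (splice_ode_vars n phi s' z) as [_ HdX]; split; [|split].
      * rewrite HdX, Hode.
        apply teval_coinc, (agree_union_l _ _ _ _ (Hsplice_FV z Hz)).
      * apply (Hq (phi z)); [exact (agree_union_r _ _ _ _ (Hsplice_FV z Hz)) | exact Hqz].
      * intros y Hy1 Hy2; unfold splice.
        destruct (var_eq_dec y (Var n)); [contradiction|].
        destruct (var_eq_dec y (DVar n)); [contradiction | reflexivity].
    + intros Hr0 z Hz.
      rewrite (proj2 (splice_ode_vars n phi s' z)).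
      apply (deriv_within_ext (fun u => phi u (Var n))); [|apply Hder; auto].
      intros w; symmetry; apply splice_ode_vars.
  - eapply agree_sub; [|apply Hsplice; split; [exact Hr | apply Rle_refl]].
    intros v [Hv | Hv]; auto.
Qed.

Lemma connective_coinc (op : Prop -> Prop -> Prop) p q s s' :
  (forall P P' Q Q', (P <-> P') -> (Q <-> Q') -> (op P Q <-> op P' Q')) ->
  fml_coincides p -> fml_coincides q ->
  agree (fun v => FVf p v \/ FVf q v) s s' ->
  (op (fsem p s) (fsem q s) <-> op (fsem p s') (fsem q s')).
Proof.
  intros Hop Hp Hq Hag; apply Hop;
    [apply Hp, (agree_union_l _ _ _ _ Hag) | apply Hq, (agree_union_r _ _ _ _ Hag)].
Qed.

Theorem coincidence : (forall p, fml_coincides p) /\ (forall a, prog_coincides a).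
Proof.
  apply fml_prog_ind.
  - intros s s' _; reflexivity.
  - intros s s' _; reflexivity.
  - intros a b s s' Hag; apply cmp_coinc, Hag.
  - intros a b s s' Hag; apply cmp_coinc, Hag.
  - intros a b s s' Hag; apply cmp_coinc, Hag.
  - intros p Hp s s' Hag; simpl; rewrite (Hp s s' Hag); reflexivity.
  - intros p Hp q Hq s s' Hag; apply (connective_coinc and); auto; tauto.
  - intros p Hp q Hq s s' Hag; apply (connective_coinc or); auto; tauto.
  - intros p Hp q Hq s s' Hag; apply (connective_coinc (fun P Q => P -> Q)); auto; tauto.
  - intros x p Hp; apply forall_coincides, Hp.
  - intros x p Hp; apply exists_coincides, Hp.
  - intros a Ha p Hp; apply box_coincides; assumption.
  - intros a Ha p Hp; apply dia_coincides; assumption.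
  - intros x t; apply assign_coincides.
  - intros x; apply rand_coincides.
  - intros q Hq; apply test_coincides, Hq.
  - intros n t q Hq; apply ode_coincides, Hq.
  - intros a Ha b Hb; apply seq_coincides; assumption.
  - intros a Ha b Hb; apply choice_coincides; assumption.
  - intros a Ha; apply loop_coincides, Ha.
Qed.

Definition simulates (H : vset) (a b : prog) : Prop :=
  forall s0 s1, psem a s0 s1 ->
  exists s0' s1', psem b s0' s1' /\ agree H s0 s0' /\ agree H s1 s1'.

Lemma seq_simulates H A B C D :
  (forall v, FVp D v -> H v) ->
  simulates H A B -> simulates H C D -> simulates H (PSeq A C) (PSeq B D).
Proof.
  intros HFV HAB HCD s0 s2 [m [Hm Hs]].
  destruct (HAB _ _ Hm) as [s0' [m' [Hm' [Hag0 Hagm]]]].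
  destruct (HCD _ _ Hs) as [m'' [s2' [Hs' [Hagm' Hag2]]]].
  assert (Hmid : agree H m'' m') by (eapply agree_trans; [apply agree_sym|]; eauto).
  destruct (proj2 coincidence D H m'' m' s2' HFV Hmid Hs') as [s2'' [Hs'' Hag2']].
  exists s0', s2''; split; [exists m'; auto|]; split; [exact Hag0|].
  eapply agree_trans; [exact Hag2 | eapply agree_union_l, Hag2'].
Qed.

Theorem theorem2 (A B C D : prog) (H : vset) :
  loop_free A -> loop_free B -> loop_free C -> loop_free D ->
  (forall v, FVp C v \/ FVp D v -> H v) ->
  equivH H A B -> equivH H C D ->
  equivH H (PSeq A C) (PSeq B D).
Proof.
  intros _ _ _ _ HFV [HAB HBA] [HCD HDC]; split.
  - apply seq_simulates; auto.
  - apply seq_simulates; auto.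
Qed.
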